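(* Consider the LSTM network with input $u\in\mathbb{R}^{n_u}$, state $\chi=(x,\xi)\in\mathbb{R}^{n_x}\times\mathbb{R}^{n_x}$ and output $y\in\mathbb{R}^{n_y}$: \[ \begin{aligned} x^+ &= \sigma_g(W_f u + U_f \xi + b_f)\circ x + \sigma_g(W_i u + U_i \xi + b_i)\circ \sigma_c(W_c u + U_c \xi + b_c),\\ \xi^+ &= \sigma_g(W_o u + U_o \xi + b_o)\circ \sigma_c(x^+),\\ y &= C\xi + b_y, \end{aligned} \] with inputs restricted to $\mathcal{U}=[-u_{\max},u_{\max}]^{n_u}$. Define \[ A=\begin{bmatrix}\bar{\sigma}_g^f & \bar{\sigma}_g^i\|U_c\|\\ \bar{\sigma}_g^o\bar{\sigma}_g^f & \bar{\sigma}_g^o\bar{\sigma}_g^i\|U_c\|\end{bmatrix}. \] If $\rho(A)<1$, then the network is input-to-state stable (ISS) with respect to the input $u$ and the bias $b_c$: there exist $\beta\in\mathcal{KL}$ and $\gamma_v,\gamma_b\in\mathcal{K}_\infty$ such that for every $k\in\mathbb{Z}_{\ge 0}$, every initial state $\chi_0\in\mathcal{X}$, and every input sequence $u(0),u(1),\dots$ with $u(\tau)\in\mathcal{U}$, \[ \|\chi(k)\|\le \beta(\|\chi_0\|,k)+\gamma_v\big(\max_{h\ge0}\|u(h)\|\big)+\gamma_b(\|b_c\|). \]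
   Context: $\sigma_g(t)=1/(1+e^{-t})$ and $\sigma_c(t)=\tanh(t)$ are applied entrywise; $\circ$ is the entrywise (Hadamard) product. $W_\star\in\mathbb{R}^{n_x\times n_u}$, $U_\star\in\mathbb{R}^{n_x\times n_x}$ ($\star\in\{f,i,o,c\}$), $C\in\mathbb{R}^{n_y\times n_x}$, $b_\star\in\mathbb{R}^{n_x}$, $b_y\in\mathbb{R}^{n_y}$. $\|\cdot\|$ is the Euclidean norm for vectors and the induced 2-norm for matrices; $\|\cdot\|_\infty$ is the induced $\infty$-norm (maximum absolute row sum); $\rho(\cdot)$ is the spectral radius. For $\star\in\{f,i,o\}$, $\bar{\sigma}_g^\star=\sigma_g\big(\|[\,W_\star u_{\max}\ \ U_\star\ \ b_\star\,]\|_\infty\big)$, where $[\cdot\ \cdot\ \cdot]$ is horizontal concatenation; $\bar{\sigma}_c^c=\sigma_c\big(\|[\,W_c u_{\max}\ \ U_c\ \ b_c\,]\|_\infty\big)$. The state set is $\mathcal{X}=\{(x,\xi): |x_{(j)}|\le \bar{\sigma}_g^i\bar{\sigma}_c^c/(1-\bar{\sigma}_g^f),\ \xi_{(j)}\in(-1,1),\ j=1,\dots,n_x\}$. A $\mathcal{K}$ function is continuous, strictly increasing, zero at zero; $\mathcal{K}_\infty$ additionally unbounded; $\beta\in\mathcal{KL}$ means $\beta(\cdot,k)\in\mathcal{K}$ for each $k$, $\beta(s,\cdot)$ strictly decreasing with $\beta(s,k)\to0$ as $k\to\infty$ for $s>0$. *)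

From HB Require Import structures.
From mathcomp Require Import all_boot all_order all_algebra.
From mathcomp Require Import all_classical all_reals all_analysis.
From mathcomp Require Import complex.
Set Implicit Arguments. Unset Strict Implicit. Unset Printing Implicit Defensive.
Import Order.TTheory GRing.Theory Num.Theory.
Import numFieldNormedType.Exports.
Local Open Scope classical_set_scope.
Local Open Scope ring_scope.

Section LSTMDefs.
Variable R : realType.

Definition sigma_g (t : R) : R := 1 / (1 + expR (- t)).
Definition tanhR (t : R) : R := (expR t - expR (- t)) / (expR t + expR (- t)).
Definition sigma_c (t : R) : R := tanhR t.

Definition entrywise m n (f : R -> R) (M : 'M[R]_(m, n)) : 'M[R]_(m, n) :=
  map_mx f M.
Definition hadamard m n (A B : 'M[R]_(m, n)) : 'M[R]_(m, n) :=
  \matrix_(i, j) (A i j * B i j).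

Definition vnorm n (v : 'cV[R]_n) : R := Num.sqrt (\sum_(i < n) v i 0 ^+ 2).

Definition mnorm2 m n (M : 'M[R]_(m, n)) : R :=
  sup [set vnorm (M *m v) | v in [set v : 'cV[R]_n | vnorm v <= 1]].

Definition mnorm_inf m n (M : 'M[R]_(m, n)) : R :=
  \big[Num.max/0]_(i < m) \sum_(j < n) `|M i j|.

Definition cmodulus (z : complex R) : R := Num.sqrt (complex.Re z ^+ 2 + complex.Im z ^+ 2).
Definition spectral_radius n (A : 'M[R]_n) : R :=
  sup [set cmodulus l | l in
        [set l : complex R | eigenvalue (map_mx (fun x : R => Complex x 0) A) l]].

Definition class_K (a : R -> R) : Prop :=
  {within [set s : R | 0 <= s], continuous a} /\
  (forall s t : R, 0 <= s -> s < t -> a s < a t) /\ a 0 = 0.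
Definition class_Kinf (a : R -> R) : Prop :=
  class_K a /\ (forall M : R, exists s : R, 0 <= s /\ M < a s).
Definition class_KL (b : R -> nat -> R) : Prop :=
  (forall k : nat, class_K (fun s => b s k)) /\
  (forall s : R, 0 < s ->
     (forall k : nat, b s k.+1 < b s k) /\ (b s k @[k --> \oo] --> 0)).

Variables nu nx ny : nat.

Definition lstm_state := ('cV[R]_nx * 'cV[R]_nx)%type.

Definition state_norm (chi : lstm_state) : R := vnorm (col_mx chi.1 chi.2).

Definition lstm_step (Wf Wi Wo Wc : 'M[R]_(nx, nu)) (Uf Ui Uo Uc : 'M[R]_nx)
    (bf bi bo bc : 'cV[R]_nx) (chi : lstm_state) (u : 'cV[R]_nu) : lstm_state :=
  let x := chi.1 in let xi := chi.2 in
  let xp := hadamard (entrywise sigma_g (Wf *m u + Uf *m xi + bf)) x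
          + hadamard (entrywise sigma_g (Wi *m u + Ui *m xi + bi))
                     (entrywise sigma_c (Wc *m u + Uc *m xi + bc)) in
  let xip := hadamard (entrywise sigma_g (Wo *m u + Uo *m xi + bo))
                      (entrywise sigma_c xp) in
  (xp, xip).

Fixpoint lstm_traj (Wf Wi Wo Wc : 'M[R]_(nx, nu)) (Uf Ui Uo Uc : 'M[R]_nx)
    (bf bi bo bc : 'cV[R]_nx) (chi0 : lstm_state) (u : nat -> 'cV[R]_nu)
    (k : nat) : lstm_state :=
  match k with
  | 0%N => chi0
  | k'.+1 => lstm_step Wf Wi Wo Wc Uf Ui Uo Uc bf bi bo bc
               (lstm_traj Wf Wi Wo Wc Uf Ui Uo Uc bf bi bo bc chi0 u k') (u k')
  end.

(* output map y = C xi + b_y (not needed for the ISS statement) *)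
Definition lstm_output (C : 'M[R]_(ny, nx)) (by_ : 'cV[R]_ny) (chi : lstm_state)
  : 'cV[R]_ny := C *m chi.2 + by_.

Definition input_set (umax : R) : set 'cV[R]_nu :=
  [set u | forall j : 'I_nu, - umax <= u j 0 <= umax].

Definition gate_bound (umax : R) (W : 'M[R]_(nx, nu)) (U : 'M[R]_nx)
    (b : 'cV[R]_nx) : R :=
  mnorm_inf (row_mx (row_mx (umax *: W) U) b).
Definition sbar_g umax W U b : R := sigma_g (gate_bound umax W U b).
Definition sbar_c umax W U b : R := sigma_c (gate_bound umax W U b).

Definition state_set (sgi scc sgf : R) : set lstm_state :=
  [set chi : lstm_state | forall j : 'I_nx,
     `|chi.1 j 0| <= sgi * scc / (1 - sgf) /\ - 1 < chi.2 j 0 < 1].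

Definition A_mat (sgf sgi sgo nUc : R) : 'M[R]_2 :=
  \matrix_(i < 2, j < 2)
    (if (i == 0 :> nat) then (if (j == 0 :> nat) then sgf else sgi * nUc)
     else (if (j == 0 :> nat) then sgo * sgf else sgo * sgi * nUc)).

End LSTMDefs.

From HB Require Import structures.
From mathcomp Require Import all_boot all_order all_algebra.
From mathcomp Require Import all_classical all_reals all_analysis.
From mathcomp Require Import complex.
From mathcomp Require Import ring lra.
Import Order.TTheory GRing.Theory Num.Theory.
Import numFieldNormedType.Exports.
Local Open Scope classical_set_scope.
Local Open Scope ring_scope.
Set Implicit Arguments. Unset Strict Implicit.

(* Since 0 < sigma_g <= 1 and |tanh z| <= min(1, |z|), every hidden state
   xi(k), k >= 1, lies in [-1, 1]^nx, as does xi(0) for an initial state in X.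
   On inputs in U the gate pre-activations are then bounded entrywise by the
   infinity-norms defining the sigma-bars, so each gate is bounded by its
   sigma-bar.  Hence p_k = |x(k)| and q_k = |xi(k)| satisfy the comparison
   system with matrix A,
     p_(k+1) <= sgf p_k + sgi (|Uc| q_k + |Wc| |u(k)| + |bc|),
     q_(k+1) <= sgo p_(k+1).
   A = (1, sgo)^T (sgf, sgi |Uc|) has rank one, so
   rho(A) = sgf + sgo sgi |Uc| =: t, and substituting the second inequality
   into the first gives p_(k+1) <= t p_k + d: geometric decay of the initial
   state plus a gain that is linear in sup |u| and |bc|. *)

Section Activations.
Variable R : realType.
Implicit Types z : R.

(* tanh z <= z with the denominators cleared *)
Lemma mul1B_expR_le z : 0 <= z -> (1 - z) * expR z <= (1 + z) * expR (- z).
Proof.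
move=> z0.
pose g z : R := (1 + z) * (expR z)^-1 - expR z * (1 - z).
have g'E x : is_derive x (1 : R) g (x * (expR x - (expR x)^-1)).
  have ? : expR x != 0 by rewrite expR_eq0.
  by apply: is_derive_eq; rewrite /GRing.scale /=; field.
have g_ge0 : 0 <= g z.
  have -> : 0 = g 0 by rewrite /g expR0 invr1; ring.
  apply: (@ger0_derive1_ndecry R g 0) => //.
  - move=> x; rewrite in_itv /= andbT => x0.
    rewrite derive1E (derive_val (is_derive := g'E x)) mulr_ge0 ?(ltW x0) //.
    by rewrite subr_ge0 -expRN ler_expR; lra.
  - by apply: derivable_within_continuous => x _; case: (g'E x).
by move: g_ge0; rewrite /g expRN; lra.
Qed.

Lemma tanhRN z : tanhR (- z) = - tanhR z.
Proof. by rewrite /tanhR opprK -mulNr opprB (addrC (expR z)). Qed.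

Lemma tanhR_ge0_le z : 0 <= z -> 0 <= tanhR z <= z.
Proof.
move=> z0; have := mul1B_expR_le z0; rewrite /tanhR.
have E0 := expR_gt0 z; have F0 := expR_gt0 (- z).
have FE : expR (- z) <= expR z by rewrite ler_expR; lra.
move=> key; apply/andP; split.
  by apply: divr_ge0; lra.
by rewrite ler_pdivrMr ?addr_gt0 //; nra.
Qed.

Lemma norm_tanhR_le z : `|tanhR z| <= `|z|.
Proof.
have [z0|z0] := leP 0 z.
  by have /andP[? ?] := tanhR_ge0_le z0; rewrite !ger0_norm.
have /tanhR_ge0_le : 0 <= - z by lra.
rewrite tanhRN => /andP[t0 tz].
by rewrite -[`|tanhR z|]normrN -[`|z|]normrN !ger0_norm // ltW ?oppr_gt0.
Qed.

Lemma norm_tanhR_le1 z : `|tanhR z| <= 1.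
Proof.
have E0 := expR_gt0 z; have F0 := expR_gt0 (- z).
rewrite /tanhR normrM normfV (gtr0_norm (addr_gt0 E0 F0)).
by rewrite ler_pdivrMr ?addr_gt0 // mul1r ler_norml; apply/andP; split; lra.
Qed.

Lemma sigma_g_gt0 z : 0 < sigma_g z.
Proof. by rewrite /sigma_g divr_gt0 ?addr_gt0 ?expR_gt0. Qed.

Lemma sigma_g_le1 z : sigma_g z <= 1.
Proof.
rewrite /sigma_g ler_pdivrMr ?mul1r ?addr_gt0 ?expR_gt0 //.
by have := expR_gt0 (- z); lra.
Qed.

Lemma sigma_g_nondecreasing : {homo @sigma_g R : x y / x <= y}.
Proof.
move=> x y xy; rewrite /sigma_g !div1r lef_pV2 ?posrE ?addr_gt0 ?expR_gt0 //.
by rewrite lerD2l ler_expR lerN2.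
Qed.

End Activations.

Section EuclideanNorm.
Variable R : realType.
Implicit Types (n : nat) (c : R).

Lemma CauchySchwarz_sum n (a b : 'I_n -> R) :
  (\sum_i a i * b i) ^+ 2 <= (\sum_i a i ^+ 2) * (\sum_i b i ^+ 2).
Proof.
set A := \sum_i a i ^+ 2; set B := \sum_i b i ^+ 2; set S := \sum_i a i * b i.
have B0 : 0 <= B by rewrite sumr_ge0 // => i _; rewrite sqr_ge0.
have [BE0|BN0] := eqVneq B 0.
  have b0 i : b i = 0.
    apply/eqP; rewrite -sqrf_eq0; apply/eqP/(psumr_eq0P _ BE0) => // j _.
    by rewrite sqr_ge0.
  by rewrite /S big1 ?expr0n ?BE0 ?mulr0 // => i _; rewrite b0 mulr0.
have Bgt0 : 0 < B by rewrite lt_def BN0 B0.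
have : 0 <= \sum_i (B * a i - S * b i) ^+ 2.
  by rewrite sumr_ge0 // => i _; rewrite sqr_ge0.
have -> : \sum_i (B * a i - S * b i) ^+ 2 = B * (A * B - S ^+ 2).
  transitivity
    (\sum_i (B ^+ 2 * a i ^+ 2 - 2 * B * S * (a i * b i) + S ^+ 2 * b i ^+ 2)).
    by apply: eq_bigr => i _; ring.
  rewrite !big_split /= sumrN -!mulr_sumr -/A -/B -/S; ring.
by rewrite pmulr_rge0 // subr_ge0.
Qed.

Lemma vnorm_ge0 n (v : 'cV[R]_n) : 0 <= vnorm v.
Proof. exact: sqrtr_ge0. Qed.

Lemma vnorm_sqr n (v : 'cV[R]_n) : vnorm v ^+ 2 = \sum_i v i 0 ^+ 2.
Proof. by rewrite sqr_sqrtr // sumr_ge0 // => i _; rewrite sqr_ge0. Qed.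

Lemma normr_entry_le_vnorm n (v : 'cV[R]_n) i : `|v i 0| <= vnorm v.
Proof.
rewrite -(ler_pXn2r (_ : 0 < 2)%N) ?nnegrE ?vnorm_ge0 // real_normK ?num_real //.
by rewrite vnorm_sqr (bigD1 i) //= lerDl sumr_ge0 // => j _; rewrite sqr_ge0.
Qed.

Lemma vnorm0 n : vnorm (0 : 'cV[R]_n) = 0.
Proof. by rewrite /vnorm big1 ?sqrtr0 // => i _; rewrite mxE expr0n. Qed.

Lemma vnorm0_eq0 n (v : 'cV[R]_n) : vnorm v = 0 -> v = 0.
Proof.
move=> v0; apply/matrixP => i j; rewrite (ord1 j) mxE; apply/normr0_eq0.
by apply/le_anti; rewrite normr_ge0 -v0 normr_entry_le_vnorm.
Qed.

Lemma vnormZ n c (v : 'cV[R]_n) : vnorm (c *: v) = `|c| * vnorm v.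
Proof.
rewrite /vnorm -sqrtr_sqr -sqrtrM ?sqr_ge0 // mulr_sumr.
by congr Num.sqrt; apply: eq_bigr => i _; rewrite mxE exprMn.
Qed.

Lemma vnormD n (u v : 'cV[R]_n) : vnorm (u + v) <= vnorm u + vnorm v.
Proof.
rewrite -(ler_pXn2r (_ : 0 < 2)%N) ?nnegrE ?addr_ge0 ?vnorm_ge0 //.
set S := \sum_i u i 0 * v i 0.
have -> : vnorm (u + v) ^+ 2 = vnorm u ^+ 2 + vnorm v ^+ 2 + 2 * S.
  rewrite !vnorm_sqr mulr_sumr -!big_split /=.
  by apply: eq_bigr => i _; rewrite mxE; ring.
have : S <= vnorm u * vnorm v.
  apply: le_trans (ler_norm S) _.
  rewrite -(ler_pXn2r (_ : 0 < 2)%N) ?nnegrE ?mulr_ge0 ?vnorm_ge0 //.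
  by rewrite real_normK ?num_real // exprMn !vnorm_sqr CauchySchwarz_sum.
by rewrite sqrrD; lra.
Qed.

Lemma ler_vnorm n (u v : 'cV[R]_n) :
  (forall i, `|u i 0| <= `|v i 0|) -> vnorm u <= vnorm v.
Proof.
move=> uv; rewrite ler_sqrt ?sumr_ge0 // => [|i _]; last by rewrite sqr_ge0.
apply: ler_sum => i _.
rewrite -(real_normK (num_real (u i 0))) -(real_normK (num_real (v i 0))).
by rewrite lerXn2r ?nnegrE.
Qed.

Lemma vnorm_hadamard_le n (a v : 'cV[R]_n) c : 0 <= c ->
  (forall i, `|a i 0| <= c) -> vnorm (hadamard a v) <= c * vnorm v.
Proof.
move=> c0 ac; rewrite -(ger0_norm c0) -vnormZ; apply: ler_vnorm => i.
by rewrite !mxE !normrM (ger0_norm c0) ler_wpM2r.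
Qed.

Lemma vnorm_entrywise_le n (f : R -> R) (v : 'cV[R]_n) :
  (forall t, `|f t| <= `|t|) -> vnorm (entrywise f v) <= vnorm v.
Proof. by move=> fle; apply: ler_vnorm => i; rewrite mxE. Qed.

Lemma vnorm_le_sqrt n (v : 'cV[R]_n) c :
  (forall i, `|v i 0| <= c) -> vnorm v <= Num.sqrt (n%:R * c ^+ 2).
Proof.
move=> vc; have -> : n%:R * c ^+ 2 = \sum_(i < n) c ^+ 2.
  by rewrite sumr_const card_ord mulr_natl.
rewrite ler_sqrt ?sumr_ge0 // => [|i _]; last by rewrite sqr_ge0.
apply: ler_sum => i _; rewrite -(real_normK (num_real (v i 0))) lerXn2r ?nnegrE //.
exact: le_trans (normr_ge0 _) (vc i).
Qed.

Lemma vnorm_col_mx n (a b : 'cV[R]_n) :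
  vnorm (col_mx a b) = Num.sqrt (vnorm a ^+ 2 + vnorm b ^+ 2).
Proof.
rewrite !vnorm_sqr /vnorm big_split_ord /=.
by congr (Num.sqrt (_ + _)); apply: eq_bigr => i _; rewrite ?col_mxEu ?col_mxEd.
Qed.

Lemma vnorm_col_mx_le n (a b : 'cV[R]_n) :
  vnorm (col_mx a b) <= vnorm a + vnorm b.
Proof.
rewrite vnorm_col_mx -[leRHS]ger0_norm ?addr_ge0 ?vnorm_ge0 // -sqrtr_sqr.
by rewrite ler_sqrt ?sqr_ge0 //; have := vnorm_ge0 a; have := vnorm_ge0 b; nra.
Qed.

Lemma vnorm_le_col_mxl n (a b : 'cV[R]_n) : vnorm a <= vnorm (col_mx a b).
Proof.
rewrite vnorm_col_mx -[leLHS]ger0_norm ?vnorm_ge0 // -sqrtr_sqr.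
by rewrite ler_sqrt ?addr_ge0 ?sqr_ge0 // lerDl sqr_ge0.
Qed.

Lemma vnorm_le_col_mxr n (a b : 'cV[R]_n) : vnorm b <= vnorm (col_mx a b).
Proof.
rewrite vnorm_col_mx -[leLHS]ger0_norm ?vnorm_ge0 // -sqrtr_sqr.
by rewrite ler_sqrt ?addr_ge0 ?sqr_ge0 // lerDr sqr_ge0.
Qed.

End EuclideanNorm.

Section InducedNorm.
Variables (R : realType) (m n : nat) (M : 'M[R]_(m, n)).

Lemma has_sup_mnorm2 :
  has_sup [set vnorm (M *m v) | v in [set v : 'cV[R]_n | vnorm v <= 1]].
Proof.
split; first by exists (vnorm (M *m 0)), 0; rewrite //= vnorm0.
exists (Num.sqrt (m%:R * (\sum_i \sum_j `|M i j|) ^+ 2)) => _ [v v1 <-].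
apply: vnorm_le_sqrt => i; rewrite mxE; apply: le_trans (ler_norm_sum _ _ _) _.
apply: (@le_trans _ _ (\sum_j `|M i j|)).
  apply: ler_sum => j _; rewrite normrM -[leRHS]mulr1 ler_wpM2l //.
  exact: le_trans (normr_entry_le_vnorm v j) v1.
by rewrite (bigD1 i) //= lerDl sumr_ge0 // => k _; rewrite sumr_ge0.
Qed.

Lemma vnorm_mulmx_le1 (v : 'cV[R]_n) :
  vnorm v <= 1 -> vnorm (M *m v) <= mnorm2 M.
Proof. by move=> v1; apply: sup_upper_bound has_sup_mnorm2 _ _; exists v. Qed.

Lemma mnorm2_ge0 : 0 <= mnorm2 M.
Proof.
by rewrite -(vnorm0 R m) -(mulmx0 _ M) vnorm_mulmx_le1 // vnorm0.
Qed.

Lemma vnorm_mulmx_le (v : 'cV[R]_n) : vnorm (M *m v) <= mnorm2 M * vnorm v.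
Proof.
have [v0|vN0] := eqVneq (vnorm v) 0.
  by rewrite (vnorm0_eq0 v0) mulmx0 !vnorm0 mulr0.
have v_gt0 : 0 < vnorm v by rewrite lt_def vN0 vnorm_ge0.
have unit_v : vnorm ((vnorm v)^-1 *: v) <= 1.
  by rewrite vnormZ ger0_norm ?invr_ge0 ?vnorm_ge0 // mulVf.
have := vnorm_mulmx_le1 unit_v.
by rewrite -scalemxAr vnormZ ger0_norm ?invr_ge0 ?vnorm_ge0 // mulrC ler_pdivrMr.
Qed.

End InducedNorm.

Section RankOneEigenvalues.
Variable F : fieldType.

Lemma eigenvalue_rank1 n (u : 'cV[F]_n.+1) (w : 'rV[F]_n.+1) :
  eigenvalue (u *m w) ((w *m u) 0 0).
Proof.
apply/eigenvalueP; have [->|wN0] := eqVneq w 0; last first.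
  by exists w; rewrite // mulmxA {1}[w *m u]mx11_scalar mul_scalar_mx.
exists (const_mx 1); first by rewrite !mulmx0 mul0mx mxE scale0r.
by apply/eqP => /matrixP /(_ 0 0); rewrite !mxE => /eqP; rewrite oner_eq0.
Qed.

Lemma eigenvalue_rank1P n (u : 'cV[F]_n) (w : 'rV[F]_n) a :
  eigenvalue (u *m w) a -> a = 0 \/ a = (w *m u) 0 0.
Proof.
case/eigenvalueP => v vA vN0; set s := (v *m u) 0 0.
have svw : s *: w = a *: v.
  by rewrite -vA mulmxA [v *m u]mx11_scalar mul_scalar_mx.
have [s0|sN0] := eqVneq s 0.
  left; apply/eqP; have : a *: v == 0 by rewrite -svw s0 scale0r.
  by rewrite scaler_eq0 (negbTE vN0) orbF.
right; apply: (mulfI sN0); rewrite mulrC.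
have := congr1 (fun x => (x *m u) 0 0) svw.
by rewrite /= -!scalemxAl !mxE => ->; rewrite /s mxE.
Qed.

End RankOneEigenvalues.

Section SpectralRadius.
Variable R : realType.
Local Open Scope complex_scope.

Lemma cmodulus_real (x : R) : cmodulus x%:C = `|x|.
Proof. by rewrite /cmodulus /= expr0n addr0 sqrtr_sqr. Qed.

Lemma A_mat_rank1 (sgf sgi sgo nUc : R) :
  A_mat sgf sgi sgo nUc =
  (\col_(j < 2) (if j == 0 :> nat then 1 else sgo)) *m
  (\row_(j < 2) (if j == 0 :> nat then sgf else sgi * nUc)).
Proof.
apply/matrixP => i j; rewrite !mxE big_ord1 !mxE.
by case: i => [[|[|i]] ?]; case: j => [[|[|j]] ?]; rewrite //= ?mul1r ?mulrA.
Qed.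

Lemma spectral_radius_A_mat (sgf sgi sgo nUc : R) :
  spectral_radius (A_mat sgf sgi sgo nUc) = `|sgf + sgo * sgi * nUc|.
Proof.
rewrite /spectral_radius.
change (fun x : R => Complex x 0) with (real_complex R).
rewrite A_mat_rank1 map_mxM.
set u := map_mx _ _; set w := map_mx _ _.
have wuE : (w *m u) 0 0 = (sgf + sgo * sgi * nUc)%:C.
  rewrite !mxE !big_ord_recl big_ord0 !mxE /= addr0 mulr1 -rmorphM -rmorphD /=.
  by rewrite [sgi * nUc * sgo]mulrC mulrA.
set S := (X in sup X = _).
have S_ub : ubound S `|sgf + sgo * sgi * nUc|.
  move=> _ [l /eigenvalue_rank1P [->|->] <-].
    by rewrite -[0]/(0%:C) cmodulus_real normr0.
  by rewrite wuE cmodulus_real.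
have S_t : S (cmodulus ((w *m u) 0 0)).
  by exists ((w *m u) 0 0); first exact: eigenvalue_rank1.
apply/le_anti/andP; split.
  by apply: ge_sup S_ub; exists (cmodulus ((w *m u) 0 0)).
rewrite -cmodulus_real -wuE; apply: sup_upper_bound => //.
by split; [exists (cmodulus ((w *m u) 0 0)) | exists `|sgf + sgo * sgi * nUc|].
Qed.

End SpectralRadius.

Section GateBounds.
Variables (R : realType) (nu nx : nat) (umax : R).
Variables (W : 'M[R]_(nx, nu)) (U : 'M[R]_nx) (b : 'cV[R]_nx).

Lemma sbar_g_gt0 : 0 < sbar_g umax W U b.
Proof. exact: sigma_g_gt0. Qed.

Lemma sbar_g_ge0 : 0 <= sbar_g umax W U b.
Proof. exact: ltW sbar_g_gt0. Qed.

Lemma sbar_g_le1 : sbar_g umax W U b <= 1.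
Proof. exact: sigma_g_le1. Qed.

Lemma normr_gate_input_le (u : 'cV[R]_nu) (xi : 'cV[R]_nx) :
  input_set umax u -> (forall j, `|xi j 0| <= 1) ->
  forall i, `|(W *m u + U *m xi + b) i 0| <= gate_bound umax W U b.
Proof.
move=> u_in xi_le1 i; apply: le_trans (le_bigmax _ _ i).
rewrite !big_split_ord /= big_ord1 row_mxEr.
under eq_bigr do rewrite !row_mxEl.
under [X in _ <= _ + X + _]eq_bigr do rewrite row_mxEl row_mxEr.
rewrite !mxE.
apply: le_trans (ler_normD _ _) _; rewrite lerD2r.
apply: le_trans (ler_normD _ _) _; apply: lerD.
- apply: le_trans (ler_norm_sum _ _ _) _; apply: ler_sum => j _.
  rewrite mxE !normrM mulrC ler_wpM2r //.
  by apply: le_trans (ler_norm _); rewrite ler_norml.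
- apply: le_trans (ler_norm_sum _ _ _) _; apply: ler_sum => j _.
  by rewrite normrM -[leRHS]mulr1 ler_wpM2l.
Qed.

Lemma gate_le_sbar_g (u : 'cV[R]_nu) (xi : 'cV[R]_nx) :
  input_set umax u -> (forall j, `|xi j 0| <= 1) ->
  forall i,
  `|entrywise (@sigma_g R) (W *m u + U *m xi + b) i 0| <= sbar_g umax W U b.
Proof.
move=> u_in xi_le1 i; rewrite /sbar_g mxE ger0_norm; last exact/ltW/sigma_g_gt0.
apply: sigma_g_nondecreasing; apply: le_trans (ler_norm _) _.
exact: normr_gate_input_le.
Qed.

End GateBounds.

Section ComparisonFunctions.
Variable R : realType.

Lemma class_K_scale (c : R) : 0 < c -> class_K (fun s => c * s).
Proof.
move=> c0; split; last split.
- by apply: continuous_subspaceT => x; exact: mulrl_continuous.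
- by move=> s t _ st; rewrite ltr_pM2l.
- by rewrite mulr0.
Qed.

Lemma class_Kinf_scale (c : R) : 0 < c -> class_Kinf (fun s => c * s).
Proof.
move=> c0; split; first exact: class_K_scale.
move=> M; exists (`|M| / c + 1); split.
  by rewrite addr_ge0 // divr_ge0 // ltW.
rewrite mulrDr mulr1 mulrCA divff ?gt_eqF // mulr1.
by have := ler_norm M; lra.
Qed.

Lemma class_KL_geometric (c t : R) : 0 < c -> 0 < t -> t < 1 ->
  class_KL (fun s k => c * s * t ^+ k).
Proof.
move=> c0 t0 t1; split.
  move=> k; have := class_K_scale (mulr_gt0 c0 (exprn_gt0 k t0)).
  by congr class_K; apply: funext => s; rewrite mulrAC.
move=> s s0; split.
  by move=> k; rewrite exprS mulrCA gtr_pMl // !mulr_gt0 // exprn_gt0.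
by have := @cvg_geometric R (c * s) t; rewrite gtr0_norm //; apply.
Qed.

End ComparisonFunctions.

Section ComparisonRecurrence.
Variables (R : realType) (a b c d : R) (p q : nat -> R).
Hypotheses (b_ge0 : 0 <= b) (d_ge0 : 0 <= d).
Hypotheses (rate_ge0 : 0 <= a + b * c) (rate_lt1 : a + b * c < 1).
Hypothesis p_step : forall k, p k.+1 <= a * p k + b * q k + d.
Hypothesis q_step : forall k, q k.+1 <= c * p k.+1.

Lemma comparison_recurrence_le k :
  p k.+1 <= (a + b * c) ^+ k * (a * p 0 + b * q 0) + d / (1 - (a + b * c)).
Proof.
set t := a + b * c; set X := d / (1 - t).
have t_neq1 : 1 - t != 0 by rewrite subr_eq0 gt_eqF.
have XE : t * X + d = X by rewrite /X; field.
have dX : d <= X.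
  by rewrite /X ler_pdivlMr ?subr_gt0 // ler_piMr // gerBl.
elim: k => [|k IH].
  by rewrite expr0 mul1r; apply: le_trans (p_step 0) _; rewrite lerD2l.
apply: le_trans (p_step k.+1) _.
have bq : b * q k.+1 <= b * c * p k.+1 by rewrite -mulrA ler_wpM2l.
have tp : t * p k.+1 <= t * (t ^+ k * (a * p 0 + b * q 0) + X).
  by rewrite ler_wpM2l.
rewrite exprS -XE; move: bq tp; rewrite /t; lra.
Qed.

End ComparisonRecurrence.

Section LSTMBounds.
Variables (R : realType) (nu nx : nat) (umax : R).
Variables (Wf Wi Wo Wc : 'M[R]_(nx, nu)) (Uf Ui Uo Uc : 'M[R]_nx).
Variables (bf bi bo bc : 'cV[R]_nx).

Local Notation step := (lstm_step Wf Wi Wo Wc Uf Ui Uo Uc bf bi bo bc).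
Local Notation sgf := (sbar_g umax Wf Uf bf).
Local Notation sgi := (sbar_g umax Wi Ui bi).
Local Notation sgo := (sbar_g umax Wo Uo bo).

Lemma lstm_step_hidden_le1 (chi : lstm_state R nx) (u : 'cV[R]_nu) j :
  `|(step chi u).2 j 0| <= 1.
Proof.
rewrite !mxE normrM -[1]mulr1 ler_pM ?norm_tanhR_le1 //.
by rewrite ger0_norm ?sigma_g_le1 // ltW ?sigma_g_gt0.
Qed.

Lemma lstm_rate_gt0 : 0 < sgf + sgo * sgi * mnorm2 Uc.
Proof.
apply: lt_le_trans (sbar_g_gt0 umax Wf Uf bf) _.
by rewrite lerDl ?mulr_ge0 ?sbar_g_ge0 ?mnorm2_ge0.
Qed.

Section OneStep.
Variables (chi : lstm_state R nx) (u : 'cV[R]_nu).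
Hypotheses (u_in : input_set umax u) (hidden_le1 : forall j, `|chi.2 j 0| <= 1).

Lemma vnorm_lstm_step_cell_le :
  vnorm (step chi u).1 <= sgf * vnorm chi.1
    + sgi * (mnorm2 Uc * vnorm chi.2 + mnorm2 Wc * vnorm u + vnorm bc).
Proof.
apply: le_trans (vnormD _ _) _; apply: lerD.
  exact: vnorm_hadamard_le _ (sbar_g_ge0 umax Wf Uf bf)
    (gate_le_sbar_g Wf Uf bf u_in hidden_le1).
apply: le_trans (vnorm_hadamard_le _ (sbar_g_ge0 umax Wi Ui bi)
  (gate_le_sbar_g Wi Ui bi u_in hidden_le1)) _.
rewrite ler_wpM2l ?sbar_g_ge0 //.
apply: le_trans (vnorm_entrywise_le _ (@norm_tanhR_le R)) _.
apply: le_trans (vnormD _ _) _; rewrite lerD2r addrC.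
by apply: le_trans (vnormD _ _) _; apply: lerD; apply: vnorm_mulmx_le.
Qed.

Lemma vnorm_lstm_step_hidden_le :
  vnorm (step chi u).2 <= sgo * vnorm (step chi u).1.
Proof.
apply: le_trans (vnorm_hadamard_le _ (sbar_g_ge0 umax Wo Uo bo)
  (gate_le_sbar_g Wo Uo bo u_in hidden_le1)) _.
by rewrite ler_wpM2l ?sbar_g_ge0 ?vnorm_entrywise_le //; exact: norm_tanhR_le.
Qed.

Lemma state_norm_lstm_step_le :
  state_norm (step chi u) <= 2 * vnorm (step chi u).1.
Proof.
apply: le_trans (vnorm_col_mx_le _ _) _; rewrite mulr2n mulrDl mul1r lerD2l.
apply: le_trans vnorm_lstm_step_hidden_le _.
by rewrite -[leRHS]mul1r ler_wpM2r ?vnorm_ge0 ?sbar_g_le1.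
Qed.

End OneStep.

Lemma lstm_comparison_init_le (chi : lstm_state R nx) :
  sgf * vnorm chi.1 + sgi * mnorm2 Uc * vnorm chi.2
    <= (1 + mnorm2 Uc) * state_norm chi.
Proof.
have x_le := vnorm_le_col_mxl chi.1 chi.2.
have xi_le := vnorm_le_col_mxr chi.1 chi.2.
have sgi_n : sgi * mnorm2 Uc <= mnorm2 Uc.
  by rewrite ler_piMl ?mnorm2_ge0 ?sbar_g_le1.
rewrite mulrDl mul1r; apply: lerD.
  by rewrite -[leRHS]mul1r ler_pM ?sbar_g_ge0 ?vnorm_ge0 ?sbar_g_le1.
by rewrite ler_pM ?(mulr_ge0 (sbar_g_ge0 _ _ _ _) (mnorm2_ge0 _)) ?vnorm_ge0.
Qed.

Lemma vnorm_le_sup_inputs (u : nat -> 'cV[R]_nu) k :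
  (forall h, input_set umax (u h)) ->
  vnorm (u k) <= sup [set vnorm (u h) | h in [set: nat]].
Proof.
move=> u_in; apply: sup_upper_bound; last by exists k.
split; first by exists (vnorm (u 0%N)), 0%N.
exists (Num.sqrt (nu%:R * umax ^+ 2)) => _ [h _ <-].
by apply: vnorm_le_sqrt => j; rewrite ler_norml; apply: u_in.
Qed.

Section Trajectory.
Variables (chi0 : lstm_state R nx) (u : nat -> 'cV[R]_nu) (ubar : R).
Hypothesis u_in : forall k, input_set umax (u k).
Hypothesis u_le : forall k, vnorm (u k) <= ubar.
Hypothesis chi0_hidden_le1 : forall j, `|chi0.2 j 0| <= 1.

Local Notation traj := (lstm_traj Wf Wi Wo Wc Uf Ui Uo Uc bf bi bo bc chi0 u).
Local Notation t := (sgf + sgo * sgi * mnorm2 Uc).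

Lemma lstm_traj_hidden_le1 k j : `|(traj k).2 j 0| <= 1.
Proof.
by case: k => [|k]; [exact: chi0_hidden_le1 | exact: lstm_step_hidden_le1].
Qed.

Lemma vnorm_lstm_traj_cell_le k : t < 1 ->
  vnorm (traj k.+1).1
    <= t ^+ k * (sgf * vnorm chi0.1 + sgi * mnorm2 Uc * vnorm chi0.2)
    + sgi * (mnorm2 Wc * ubar + vnorm bc) / (1 - t).
Proof.
have tE : t = sgf + sgi * mnorm2 Uc * sgo by ring.
rewrite tE => t_lt1.
apply: (comparison_recurrence_le (p := fun k => vnorm (traj k).1)
  (q := fun k => vnorm (traj k).2)).
- by rewrite mulr_ge0 ?mnorm2_ge0 ?sbar_g_ge0.
- have ubar_ge0 : 0 <= ubar := le_trans (vnorm_ge0 _) (u_le 0%N).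
  by rewrite mulr_ge0 ?addr_ge0 ?mulr_ge0 ?mnorm2_ge0 ?vnorm_ge0 ?sbar_g_ge0.
- by rewrite -tE addr_ge0 ?mulr_ge0 ?mnorm2_ge0 ?sbar_g_ge0.
- exact: t_lt1.
- move=> h; apply: le_trans
    (vnorm_lstm_step_cell_le (u_in h) (lstm_traj_hidden_le1 h)) _.
  rewrite -[leRHS]addrA lerD2l -mulrA -mulrDr ler_wpM2l ?sbar_g_ge0 //.
  by rewrite -addrA lerD2l lerD2r ler_wpM2l ?mnorm2_ge0.
- by move=> h; exact: vnorm_lstm_step_hidden_le (u_in h) (lstm_traj_hidden_le1 h).
Qed.

(* The summand 1 of the constant covers k = 0; the factor 1 / t turns the
   t ^+ k of the cell bound into t ^+ k.+1. *)
Lemma state_norm_lstm_traj_le k : t < 1 ->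
  state_norm (traj k)
    <= (1 + 2 * (1 + mnorm2 Uc) / t) * state_norm chi0 * t ^+ k
    + 2 * ((mnorm2 Wc * ubar + vnorm bc) / (1 - t)).
Proof.
move=> t_lt1; set s0 := state_norm chi0; set C := 1 + _ / t.
set G := (mnorm2 Wc * ubar + vnorm bc) / (1 - t).
have s0_ge0 : 0 <= s0 by exact: vnorm_ge0.
have ubar_ge0 : 0 <= ubar := le_trans (vnorm_ge0 _) (u_le 0%N).
have G_ge0 : 0 <= G.
  apply: divr_ge0; last by rewrite subr_ge0 ltW.
  by rewrite addr_ge0 ?vnorm_ge0 ?mulr_ge0 ?mnorm2_ge0.
have t_gt0 : 0 < t := lstm_rate_gt0.
have C_ge1 : 1 <= C.
  rewrite lerDl; apply: divr_ge0 (ltW t_gt0).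
  by rewrite mulr_ge0 ?addr_ge0 ?mnorm2_ge0.
case: k => [|k].
  have : s0 <= C * s0 by rewrite -[leLHS]mul1r ler_wpM2r.
  by rewrite expr0 mulr1 /= -/s0; lra.
have tk_ge0 : 0 <= t ^+ k := exprn_ge0 k (ltW t_gt0).
set P := vnorm (traj k.+1).1.
have chi_P : state_norm (traj k.+1) <= 2 * P.
  exact: state_norm_lstm_step_le (u_in k) (lstm_traj_hidden_le1 k).
have PG : P <= t ^+ k * ((1 + mnorm2 Uc) * s0) + G.
  apply: le_trans (vnorm_lstm_traj_cell_le k t_lt1) _.
  apply: lerD; first by rewrite ler_wpM2l ?lstm_comparison_init_le.
  by rewrite -mulrA -/G ler_piMl ?sbar_g_le1.
have decay : 2 * (t ^+ k * ((1 + mnorm2 Uc) * s0)) <= C * s0 * t ^+ k.+1.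
  have -> : C * s0 * t ^+ k.+1
            = s0 * t ^+ k.+1 + 2 * (t ^+ k * ((1 + mnorm2 Uc) * s0)).
    by rewrite /C exprS; field; exact: lt0r_neq0.
  by rewrite lerDr mulr_ge0 // exprn_ge0 // ltW.
lra.
Qed.

End Trajectory.

End LSTMBounds.

Theorem theorem1 (R : realType) (nu nx ny : nat)
    (Wf Wi Wo Wc : 'M[R]_(nx, nu)) (Uf Ui Uo Uc : 'M[R]_nx)
    (C : 'M[R]_(ny, nx)) (bf bi bo bc : 'cV[R]_nx) (b_y : 'cV[R]_ny)
    (umax : R) :
  let sgf := sbar_g umax Wf Uf bf in
  let sgi := sbar_g umax Wi Ui bi in
  let sgo := sbar_g umax Wo Uo bo in
  let scc := sbar_c umax Wc Uc bc in
  spectral_radius (A_mat sgf sgi sgo (mnorm2 Uc)) < 1 ->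
  exists (beta : R -> nat -> R) (gamma_v gamma_b : R -> R),
    class_KL beta /\ class_Kinf gamma_v /\ class_Kinf gamma_b /\
    forall (k : nat) (chi0 : lstm_state R nx) (u : nat -> 'cV[R]_nu),
      state_set sgi scc sgf chi0 ->
      (forall t : nat, input_set umax (u t)) ->
      state_norm (lstm_traj Wf Wi Wo Wc Uf Ui Uo Uc bf bi bo bc chi0 u k)
        <= beta (state_norm chi0) k
           + gamma_v (sup [set vnorm (u h) | h in [set: nat]])
           + gamma_b (vnorm bc).
Proof.
move=> sgf sgi sgo scc; rewrite spectral_radius_A_mat.
set t := sgf + sgo * sgi * mnorm2 Uc.
have t_gt0 : 0 < t by exact: lstm_rate_gt0.
rewrite gtr0_norm // => t_lt1.
have decay_ge0 : 0 <= 2 * (1 + mnorm2 Uc) / t.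
  by apply: divr_ge0 (ltW t_gt0); rewrite mulr_ge0 // addr_ge0 ?mnorm2_ge0.
have gain_ge0 : 0 <= 2 / (1 - t) by apply: divr_ge0; rewrite // subr_ge0 ltW.
have gainW_ge0 : 0 <= 2 / (1 - t) * mnorm2 Wc by rewrite mulr_ge0 ?mnorm2_ge0.
exists (fun s k => (1 + 2 * (1 + mnorm2 Uc) / t) * s * t ^+ k).
exists (fun s => (1 + 2 / (1 - t) * mnorm2 Wc) * s).
exists (fun s => (1 + 2 / (1 - t)) * s).
split; first by apply: class_KL_geometric => //; lra.
split; first by apply: class_Kinf_scale; lra.
split; first by apply: class_Kinf_scale; lra.
move=> k chi0 u chi0_in u_in; set U := sup _.
have u_le h : vnorm (u h) <= U := vnorm_le_sup_inputs h u_in.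
have U_ge0 : 0 <= U := le_trans (vnorm_ge0 _) (u_le 0%N).
have chi0_hidden j : `|chi0.2 j 0| <= 1.
  by have [_ /andP[lo hi]] := chi0_in j; rewrite ler_norml !ltW.
apply: le_trans
  (state_norm_lstm_traj_le Wc bc u_in u_le chi0_hidden k t_lt1) _.
rewrite -addrA lerD2l mulrA mulrDl mulrDr mulrDl !mul1r.
have := vnorm_ge0 bc; lra.
Qed.
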